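(* Let $x, a$ be positive real numbers and $k \geq 2$ an integer. Then \[ k\,\psi_{ak}(xk) > \psi_a(x), \] where $\psi_c(y) \coloneqq \psi(y+c)-\psi(y)$ for $c,y>0$.
   Context: $\psi=\Gamma'/\Gamma$ is the digamma function. *)

From Stdlib Require Import Reals.
From Coquelicot Require Import Coquelicot.
Open Scope R_scope.

Definition Gamma (x : R) : R :=
  RInt_gen (fun t => Rpower t (x - 1) * exp (- t))
           (at_right 0) (Rbar_locally p_infty).

Definition digamma (x : R) : R := Derive Gamma x / Gamma x.

Definition digamma_diff (c y : R) : R := digamma (y + c) - digamma y.

(* Integration by parts gives Gamma (x + 1) = x Gamma x, and convexity of exp under the integral
   makes ln Gamma convex. For a convex L with L (z + 1) = L z + ln z, the difference quotients of L
   at z = x + N lie between the chord slopes ln (z - 1) and ln z; shifting back to x shows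
   psi x = lim_N (ln (x + N) - sum_{j<N} 1 / (x + j)). Thus, with g u = 1 / (x + u) - 1 / (x + a + u),
   psi_a x is the limit of ln ((x + a + N) / (x + N)) + sum_{n<N} g n, and k psi_{ak} (k x) that of
   k ln ((x + a + N) / (x + N)) + sum_{j<kN} g (j / k). As g is positive and decreasing, the k grid
   points in [n, n + 1) contribute at least g n + (k - 1) g (n + 1), so the second expression
   exceeds the first by at least (k - 1) g 1 > 0 for every N. *)

From Stdlib Require Import Reals Lra Lia Classical.
From Coquelicot Require Import Coquelicot.
Open Scope R_scope.

Lemma exp_le_exp u v : u <= v -> exp u <= exp v.
Proof. intros [Hlt | ->]; [left; apply exp_increasing; exact Hlt | lra]. Qed.

Lemma ln_le_sub_1 w : 0 < w -> ln w <= w - 1.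
Proof.
  intros Hw. rewrite <- (ln_exp (w - 1)). apply ln_le; [exact Hw |].
  pose proof (exp_ineq1_le (w - 1)). lra.
Qed.

Lemma ln_le_2sqrt t : 0 < t -> ln t <= 2 * sqrt t.
Proof.
  intros Ht. assert (Hs : 0 < sqrt t) by (apply sqrt_lt_R0; exact Ht).
  rewrite <- (sqrt_sqrt t) at 1 by lra. rewrite ln_mult by exact Hs.
  pose proof (ln_le_sub_1 _ Hs). lra.
Qed.

Lemma ln_succ_sub_le y : 0 < y -> ln (y + 1) - ln y <= / y.
Proof.
  intros Hy. rewrite <- ln_div by lra.
  apply Rle_trans with ((y + 1) / y - 1); [apply ln_le_sub_1, Rdiv_lt_0_compat; lra |].
  right. field. lra.
Qed.

Lemma ln_succ_sub_ge y : 0 < y -> / (y + 1) <= ln (y + 1) - ln y.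
Proof.
  intros Hy.
  assert (ln y - ln (y + 1) <= - / (y + 1)); [| lra].
  rewrite <- ln_div by lra.
  apply Rle_trans with (y / (y + 1) - 1); [apply ln_le_sub_1, Rdiv_lt_0_compat; lra |].
  right. field. lra.
Qed.

Fixpoint sum_lt (f : nat -> R) (N : nat) : R :=
  match N with O => 0 | S n => sum_lt f n + f n end.

Lemma sum_lt_ext f g N : (forall j, (j < N)%nat -> f j = g j) -> sum_lt f N = sum_lt g N.
Proof.
  induction N as [| N IH]; intros H; cbn [sum_lt]; [reflexivity |].
  rewrite IH by (intros; apply H; lia). rewrite H by lia. reflexivity.
Qed.

Lemma sum_lt_minus f g N : sum_lt f N - sum_lt g N = sum_lt (fun j => f j - g j) N.
Proof. induction N as [| N IH]; cbn [sum_lt]; [ring | rewrite <- IH; ring]. Qed.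

Lemma sum_lt_scal c f N : c * sum_lt f N = sum_lt (fun j => c * f j) N.
Proof. induction N as [| N IH]; cbn [sum_lt]; [ring | rewrite <- IH; ring]. Qed.

Lemma sum_lt_add f m n : sum_lt f (m + n) = sum_lt f m + sum_lt (fun r => f (m + r)%nat) n.
Proof.
  induction n as [| n IH]; cbn [sum_lt].
  - rewrite Nat.add_0_r. ring.
  - rewrite Nat.add_succ_r. cbn [sum_lt]. rewrite IH. ring.
Qed.

Lemma sum_lt_ge_first f N : (forall j, 0 <= f j) -> f O <= sum_lt f (S N).
Proof.
  intros Hf. induction N as [| N IH]; cbn [sum_lt] in *.
  - lra.
  - pose proof (Hf (S N)). lra.
Qed.

Lemma RInt_lincomb (f g : R -> R) a b al be :
  ex_RInt f a b -> ex_RInt g a b ->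
  RInt (fun t => al * f t + be * g t) a b = al * RInt f a b + be * RInt g a b.
Proof.
  intros Hf Hg.
  rewrite (RInt_plus (V := R_CompleteNormedModule) (fun t => al * f t) (fun t => be * g t))
    by (apply (ex_RInt_scal (V := R_CompleteNormedModule)); assumption).
  rewrite (RInt_scal (V := R_CompleteNormedModule) f), (RInt_scal (V := R_CompleteNormedModule) g)
    by assumption.
  reflexivity.
Qed.

(** * Integrals of nonnegative functions over (0, +oo) *)

Definition is_RInt_sup_half_line (f : R -> R) (S : R) : Prop :=
  (forall a b, 0 < a -> a < b -> RInt f a b <= S) /\
  (forall eps, 0 < eps -> exists a0 b0, 0 < a0 < b0 /\
     forall a b, 0 < a <= a0 -> b0 <= b -> S - eps < RInt f a b).

Section HalfLine.

Variable f : R -> R.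
Hypothesis f_cont : forall t, 0 < t -> continuous f t.
Hypothesis f_ge0 : forall t, 0 < t -> 0 <= f t.

Lemma ex_RInt_half_line a b : 0 < a -> a <= b -> ex_RInt f a b.
Proof.
  intros Ha Hab. apply (ex_RInt_continuous (V := R_CompleteNormedModule)).
  intros t Ht. rewrite Rmin_left in Ht by lra. apply f_cont. lra.
Qed.

Lemma RInt_half_line_widen a b a' b' :
  0 < a' <= a -> a <= b <= b' -> RInt f a b <= RInt f a' b'.
Proof.
  intros Ha Hb.
  rewrite <- (RInt_Chasles f a' a b'), <- (RInt_Chasles f a b b')
    by (apply ex_RInt_half_line; lra).
  assert (0 <= RInt f a' a).
  { apply RInt_ge_0; [lra | apply ex_RInt_half_line; lra | intros; apply f_ge0; lra]. }
  assert (0 <= RInt f b b').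
  { apply RInt_ge_0; [lra | apply ex_RInt_half_line; lra | intros; apply f_ge0; lra]. }
  unfold plus; simpl. lra.
Qed.

Lemma ex_RInt_sup_half_line M :
  (forall a b, 0 < a -> a < b -> RInt f a b <= M) ->
  exists S, is_RInt_sup_half_line f S.
Proof.
  intros HM.
  set (E := fun r => exists a b, 0 < a < b /\ r = RInt f a b).
  destruct (completeness E) as [S [HS_ub HS_least]].
  - exists M. intros r (a & b & Hab & ->). apply HM; lra.
  - exists (RInt f 1 2), 1, 2. split; [lra | reflexivity].
  - exists S. split.
    + intros a b Ha Hab. apply HS_ub. exists a, b. split; [lra | reflexivity].
    + intros eps Heps.
      destruct (classic (exists a0 b0, 0 < a0 < b0 /\ S - eps < RInt f a0 b0))
        as [(a0 & b0 & Hab0 & Hlt) | Hnone].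
      * exists a0, b0. split; [exact Hab0 |]. intros a b Ha Hb.
        apply Rlt_le_trans with (1 := Hlt). apply RInt_half_line_widen; lra.
      * assert (S <= S - eps); [| lra].
        apply HS_least. intros r (a & b & Hab & ->).
        apply Rnot_lt_le. intros Hlt. apply Hnone. exists a, b. auto.
Qed.

Lemma is_RInt_gen_of_sup_half_line S :
  is_RInt_sup_half_line f S -> is_RInt_gen f (at_right 0) (Rbar_locally p_infty) S.
Proof.
  intros [Hub Happrox] P [eps HP].
  destruct (Happrox eps (cond_pos eps)) as (a0 & b0 & Hab0 & Hclose).
  apply Filter_prod with (fun a => 0 < a <= a0) (fun b => b0 < b).
  - exists (mkposreal a0 (proj1 Hab0)). intros a Ha Hpos.
    apply Rabs_def2 in Ha. unfold minus, plus, opp in Ha; simpl in Ha. lra.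
  - exists b0. auto.
  - intros a b Ha Hb. exists (RInt f a b). split.
    + apply (RInt_correct (V := R_CompleteNormedModule)), ex_RInt_half_line; lra.
    + apply HP, Rabs_def1; unfold minus, plus, opp; simpl.
      * assert (RInt f a b <= S) by (apply Hub; lra). pose proof (cond_pos eps). lra.
      * assert (S - eps < RInt f a b) by (apply Hclose; lra). lra.
Qed.

Lemma RInt_gen_is_sup_half_line M :
  (forall a b, 0 < a -> a < b -> RInt f a b <= M) ->
  is_RInt_sup_half_line f (RInt_gen f (at_right 0) (Rbar_locally p_infty)).
Proof.
  intros HM. destruct (ex_RInt_sup_half_line M HM) as [S HS].
  rewrite (is_RInt_gen_unique f S) by (apply is_RInt_gen_of_sup_half_line; exact HS).
  exact HS.
Qed.

End HalfLine.

(** * The Gamma function *)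

Definition gamma_integrand (x t : R) : R := Rpower t (x - 1) * exp (- t).

Lemma gamma_integrand_pos x t : 0 < gamma_integrand x t.
Proof. apply Rmult_lt_0_compat; apply exp_pos. Qed.

Lemma gamma_integrand_continuous x t : 0 < t -> continuous (gamma_integrand x) t.
Proof.
  intros Ht. apply (ex_derive_continuous (V := R_NormedModule)).
  unfold gamma_integrand, Rpower. auto_derive. exact Ht.
Qed.

Lemma ex_RInt_gamma_integrand x a b : 0 < a -> a <= b -> ex_RInt (gamma_integrand x) a b.
Proof.
  intros Ha Hab. apply ex_RInt_half_line; [| exact Ha | exact Hab].
  intros; apply gamma_integrand_continuous; assumption.
Qed.

Lemma gamma_integrand_le_Rpower x t : 0 < t -> gamma_integrand x t <= Rpower t (x - 1).
Proof.
  intros Ht. unfold gamma_integrand.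
  assert (exp (- t) <= 1) by (rewrite <- exp_0; apply exp_le_exp; lra).
  pose proof (exp_pos ((x - 1) * ln t)). unfold Rpower. nra.
Qed.

(* [(x - 1) ln t <= 2 x sqrt t <= 2 x^2 + t / 2] for [t >= 1]. *)
Lemma gamma_integrand_le_exp x t :
  0 <= x -> 1 <= t -> gamma_integrand x t <= exp (2 * x ^ 2) * exp (- t / 2).
Proof.
  intros Hx Ht. unfold gamma_integrand, Rpower. rewrite <- !exp_plus. apply exp_le_exp.
  pose proof (ln_le_2sqrt t ltac:(lra)).
  assert (0 <= ln t) by (rewrite <- ln_1; apply ln_le; lra).
  assert (sqrt t * sqrt t = t) by (apply sqrt_sqrt; lra).
  pose proof (pow2_ge_0 (sqrt t - 2 * x)).
  assert (x * ln t <= x * (2 * sqrt t)) by (apply Rmult_le_compat_l; lra).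
  nra.
Qed.

Lemma RInt_Rpower_le a x : 0 < x -> 0 < a <= 1 -> RInt (fun t => Rpower t (x - 1)) a 1 <= / x.
Proof.
  intros Hx Ha.
  assert (H : is_RInt (fun t => Rpower t (x - 1)) a 1
                (minus (Rpower 1 x / x) (Rpower a x / x))).
  { apply (is_RInt_derive (V := R_CompleteNormedModule) (fun t => Rpower t x / x)).
    - intros t Ht. rewrite Rmin_left in Ht by lra. unfold Rpower. auto_derive; [lra |].
      replace ((x - 1) * ln t) with (x * ln t + - ln t) by ring.
      rewrite exp_plus, exp_Ropp, exp_ln by lra. field. lra.
    - intros t Ht. rewrite Rmin_left in Ht by lra.
      apply (ex_derive_continuous (V := R_NormedModule)). unfold Rpower. auto_derive. lra. }
  rewrite (is_RInt_unique _ _ _ _ H). unfold minus, plus, opp; simpl.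
  unfold Rpower. rewrite ln_1, Rmult_0_r, exp_0. pose proof (exp_pos (x * ln a)). unfold Rdiv.
  assert (0 < / x) by (apply Rinv_0_lt_compat; exact Hx). nra.
Qed.

Lemma RInt_exp_half_le C b : 0 <= C -> 1 <= b -> RInt (fun t => C * exp (- t / 2)) 1 b <= 2 * C.
Proof.
  intros HC Hb.
  assert (H : is_RInt (fun t => C * exp (- t / 2)) 1 b
                (minus (- 2 * C * exp (- b / 2)) (- 2 * C * exp (- 1 / 2)))).
  { apply (is_RInt_derive (V := R_CompleteNormedModule) (fun t => - 2 * C * exp (- t / 2))).
    - intros t _. auto_derive; [exact I | unfold Rdiv; field].
    - intros t _. apply (ex_derive_continuous (V := R_NormedModule)). auto_derive. exact I. }
  rewrite (is_RInt_unique _ _ _ _ H). unfold minus, plus, opp; simpl.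
  pose proof (exp_pos (- b / 2)).
  assert (exp (- 1 / 2) <= 1) by (rewrite <- exp_0; apply exp_le_exp; lra).
  nra.
Qed.

Lemma RInt_gamma_integrand_le x a b :
  0 < x -> 0 < a -> a < b -> RInt (gamma_integrand x) a b <= / x + 2 * exp (2 * x ^ 2).
Proof.
  intros Hx Ha Hab.
  set (a' := Rmin a 1). set (b' := Rmax b 1).
  assert (Ha' : 0 < a' <= 1) by (split; [apply Rmin_glb_lt; lra | apply Rmin_r]).
  assert (Hb' : 1 <= b') by apply Rmax_r.
  apply Rle_trans with (RInt (gamma_integrand x) a' b').
  { apply RInt_half_line_widen.
    - intros; apply gamma_integrand_continuous; lra.
    - intros; left; apply gamma_integrand_pos.
    - split; [lra | apply Rmin_l].
    - split; [lra | apply Rmax_l]. }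
  rewrite <- (RInt_Chasles _ a' 1 b') by (apply ex_RInt_gamma_integrand; lra). unfold plus; simpl.
  apply Rplus_le_compat.
  - apply Rle_trans with (2 := RInt_Rpower_le a' x Hx Ha').
    apply RInt_le; [lra | apply ex_RInt_gamma_integrand; lra | |].
    + apply (ex_RInt_continuous (V := R_CompleteNormedModule)). intros t Ht.
      rewrite Rmin_left in Ht by lra. apply (ex_derive_continuous (V := R_NormedModule)).
      unfold Rpower. auto_derive. lra.
    + intros t Ht. apply gamma_integrand_le_Rpower. lra.
  - apply Rle_trans with (2 := RInt_exp_half_le (exp (2 * x ^ 2)) b' (Rlt_le _ _ (exp_pos _)) Hb').
    apply RInt_le; [lra | apply ex_RInt_gamma_integrand; lra | |].
    + apply (ex_RInt_continuous (V := R_CompleteNormedModule)). intros t _.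
      apply (ex_derive_continuous (V := R_NormedModule)). auto_derive. exact I.
    + intros t Ht. apply gamma_integrand_le_exp; lra.
Qed.

Lemma Gamma_is_sup x : 0 < x -> is_RInt_sup_half_line (gamma_integrand x) (Gamma x).
Proof.
  intros Hx. apply RInt_gen_is_sup_half_line with (M := / x + 2 * exp (2 * x ^ 2)).
  - intros; apply gamma_integrand_continuous; assumption.
  - intros; left; apply gamma_integrand_pos.
  - intros; apply RInt_gamma_integrand_le; assumption.
Qed.

Lemma Gamma_pos x : 0 < x -> 0 < Gamma x.
Proof.
  intros Hx. apply Rlt_le_trans with (RInt (gamma_integrand x) 1 2).
  - apply RInt_gt_0; [lra | intros; apply gamma_integrand_pos |].
    intros; apply gamma_integrand_continuous; lra.
  - apply (proj1 (Gamma_is_sup x Hx)); lra.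
Qed.

(* Integration by parts, with [gamma_integrand (x + 1) t = t^x e^(-t)] as boundary term. *)
Lemma RInt_gamma_integrand_succ x a b : 0 < x -> 0 < a -> a < b ->
  RInt (gamma_integrand (x + 1)) a b
  = gamma_integrand (x + 1) a - gamma_integrand (x + 1) b + x * RInt (gamma_integrand x) a b.
Proof.
  intros Hx Ha Hab.
  assert (H : is_RInt (fun t => 1 * gamma_integrand (x + 1) t + (- x) * gamma_integrand x t) a b
                (minus (- gamma_integrand (x + 1) b) (- gamma_integrand (x + 1) a))).
  { apply (is_RInt_derive (V := R_CompleteNormedModule) (fun t => - gamma_integrand (x + 1) t));
      intros t Ht; rewrite Rmin_left, Rmax_right in Ht by lra.
    - unfold gamma_integrand, Rpower. auto_derive; [lra |].
      replace (x + 1 - 1) with x by ring.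
      replace ((x - 1) * ln t) with (x * ln t + - ln t) by ring.
      rewrite exp_plus, (exp_Ropp (ln t)), exp_ln by lra. field. lra.
    - apply (ex_derive_continuous (V := R_NormedModule)).
      unfold gamma_integrand, Rpower. auto_derive. lra. }
  apply (is_RInt_unique (V := R_CompleteNormedModule)) in H.
  rewrite RInt_lincomb in H by (apply ex_RInt_gamma_integrand; lra).
  unfold minus, plus, opp in H; simpl in H. lra.
Qed.

Lemma gamma_integrand_small_near_0 x eps : 1 < x -> 0 < eps ->
  exists a1, 0 < a1 /\ forall a, 0 < a <= a1 -> gamma_integrand x a <= eps.
Proof.
  intros Hx Heps. exists (exp (ln eps / (x - 1))). split; [apply exp_pos |].
  intros a Ha. apply Rle_trans with (1 := gamma_integrand_le_Rpower x a (proj1 Ha)).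
  assert (Hln : ln a <= ln eps / (x - 1)) by (rewrite <- ln_exp; apply ln_le; lra).
  apply (Rmult_le_compat_l (x - 1)) in Hln; [| lra].
  replace ((x - 1) * (ln eps / (x - 1))) with (ln eps) in Hln by (field; lra).
  unfold Rpower. rewrite <- (exp_ln eps) by exact Heps. apply exp_le_exp. exact Hln.
Qed.

Lemma gamma_integrand_small_near_infty x eps : 0 <= x -> 0 < eps ->
  exists b1, forall b, b1 <= b -> gamma_integrand x b <= eps.
Proof.
  intros Hx Heps. set (C := exp (2 * x ^ 2)).
  exists (Rmax 1 (- 2 * ln (eps / C))). intros b Hb.
  pose proof (Rmax_l 1 (- 2 * ln (eps / C))). pose proof (Rmax_r 1 (- 2 * ln (eps / C))).
  apply Rle_trans with (1 := gamma_integrand_le_exp x b Hx ltac:(lra)). fold C.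
  assert (HC : 0 < C) by apply exp_pos.
  assert (exp (- b / 2) <= eps / C).
  { rewrite <- (exp_ln (eps / C)) by (apply Rdiv_lt_0_compat; assumption).
    apply exp_le_exp. lra. }
  replace eps with (C * (eps / C)) by (field; lra).
  apply Rmult_le_compat_l; lra.
Qed.

Lemma Gamma_succ_le x : 0 < x -> Gamma (x + 1) <= x * Gamma x.
Proof.
  intros Hx. apply Rle_plus_epsilon. intros eps Heps.
  destruct (proj2 (Gamma_is_sup (x + 1) ltac:(lra)) (eps / 2) ltac:(lra))
    as (a0 & b0 & Hab0 & Hclose).
  destruct (gamma_integrand_small_near_0 (x + 1) (eps / 2) ltac:(lra) ltac:(lra))
    as (a1 & Ha1 & Hsmall).
  assert (0 < Rmin a0 a1) by (apply Rmin_glb_lt; lra).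
  pose proof (Rmin_l a0 a1). pose proof (Rmin_r a0 a1).
  set (a := Rmin a0 a1) in *.
  specialize (Hclose a b0 ltac:(lra) ltac:(lra)).
  specialize (Hsmall a ltac:(lra)).
  rewrite RInt_gamma_integrand_succ in Hclose by lra.
  assert (RInt (gamma_integrand x) a b0 <= Gamma x) by (apply (Gamma_is_sup x Hx); lra).
  pose proof (gamma_integrand_pos (x + 1) b0). nra.
Qed.

Lemma Gamma_succ_ge x : 0 < x -> x * Gamma x <= Gamma (x + 1).
Proof.
  intros Hx. apply Rle_plus_epsilon. intros eps Heps.
  destruct (proj2 (Gamma_is_sup x Hx) (eps / (2 * x)) ltac:(apply Rdiv_lt_0_compat; lra))
    as (a0 & b0 & Hab0 & Hclose).
  destruct (gamma_integrand_small_near_infty (x + 1) (eps / 2) ltac:(lra) ltac:(lra))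
    as (b1 & Hsmall).
  pose proof (Rmax_l b0 b1). pose proof (Rmax_r b0 b1).
  set (b := Rmax b0 b1) in *.
  specialize (Hclose a0 b ltac:(lra) ltac:(lra)).
  specialize (Hsmall b ltac:(lra)).
  assert (RInt (gamma_integrand (x + 1)) a0 b <= Gamma (x + 1))
    by (apply (Gamma_is_sup (x + 1)); lra).
  rewrite RInt_gamma_integrand_succ in * by lra.
  apply (Rmult_lt_compat_l x) in Hclose; [| exact Hx].
  replace (x * (Gamma x - eps / (2 * x))) with (x * Gamma x - eps / 2) in Hclose
    by (field; lra).
  pose proof (gamma_integrand_pos (x + 1) a0). lra.
Qed.

Lemma Gamma_succ x : 0 < x -> Gamma (x + 1) = x * Gamma x.
Proof. intros Hx. apply Rle_antisym; [apply Gamma_succ_le | apply Gamma_succ_ge]; exact Hx. Qed.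

Lemma exp_convex th u v :
  0 <= th <= 1 -> exp (th * u + (1 - th) * v) <= th * exp u + (1 - th) * exp v.
Proof.
  intros Hth. set (w := th * u + (1 - th) * v).
  assert (Hu : exp w * (1 + (u - w)) <= exp u).
  { replace (exp u) with (exp w * exp (u - w)) by (rewrite <- exp_plus; f_equal; ring).
    apply Rmult_le_compat_l; [left; apply exp_pos | apply exp_ineq1_le]. }
  assert (Hv : exp w * (1 + (v - w)) <= exp v).
  { replace (exp v) with (exp w * exp (v - w)) by (rewrite <- exp_plus; f_equal; ring).
    apply Rmult_le_compat_l; [left; apply exp_pos | apply exp_ineq1_le]. }
  assert (th * (exp w * (1 + (u - w))) + (1 - th) * (exp w * (1 + (v - w))) = exp w)
    by (unfold w; ring).
  nra.
Qed.

(* Pointwise convexity of [exp] after rescaling the two integrands by [e^s] and [e^(-s)]. *)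
Lemma gamma_integrand_convex th p r s t :
  0 < th < 1 -> 0 < t ->
  gamma_integrand (th * p + (1 - th) * r) t
  <= th * exp ((1 - th) * s) * gamma_integrand p t
     + (1 - th) * exp (- th * s) * gamma_integrand r t.
Proof.
  intros Hth Ht. unfold gamma_integrand, Rpower. rewrite <- !exp_plus.
  rewrite !Rmult_assoc, <- !exp_plus.
  replace ((th * p + (1 - th) * r - 1) * ln t + - t)
    with (th * ((1 - th) * s + ((p - 1) * ln t + - t))
          + (1 - th) * (- th * s + ((r - 1) * ln t + - t))) by ring.
  apply exp_convex. lra.
Qed.

Lemma Gamma_convex th p r s :
  0 < th < 1 -> 0 < p -> 0 < r ->
  Gamma (th * p + (1 - th) * r)
  <= th * exp ((1 - th) * s) * Gamma p + (1 - th) * exp (- th * s) * Gamma r.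
Proof.
  intros Hth Hp Hr. set (m := th * p + (1 - th) * r).
  set (al := th * exp ((1 - th) * s)). set (be := (1 - th) * exp (- th * s)).
  assert (Hal : 0 < al) by (apply Rmult_lt_0_compat; [lra | apply exp_pos]).
  assert (Hbe : 0 < be) by (apply Rmult_lt_0_compat; [lra | apply exp_pos]).
  apply Rle_plus_epsilon. intros eps Heps.
  destruct (proj2 (Gamma_is_sup m ltac:(unfold m; nra)) eps Heps) as (a & b & Hab & Hclose).
  specialize (Hclose a b ltac:(lra) ltac:(lra)).
  assert (RInt (gamma_integrand m) a b
          <= al * RInt (gamma_integrand p) a b + be * RInt (gamma_integrand r) a b).
  { rewrite <- RInt_lincomb by (apply ex_RInt_gamma_integrand; lra).
    apply RInt_le; [lra | apply ex_RInt_gamma_integrand; lra | |].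
    - apply (ex_RInt_plus (V := R_CompleteNormedModule) (fun t => al * _ t) (fun t => be * _ t));
        apply (ex_RInt_scal (V := R_CompleteNormedModule)), ex_RInt_gamma_integrand; lra.
    - intros t Ht. apply gamma_integrand_convex; lra. }
  assert (RInt (gamma_integrand p) a b <= Gamma p) by (apply (Gamma_is_sup p Hp); lra).
  assert (RInt (gamma_integrand r) a b <= Gamma r) by (apply (Gamma_is_sup r Hr); lra).
  nra.
Qed.

Definition ln_Gamma (x : R) : R := ln (Gamma x).

(* Choosing [s = ln_Gamma r - ln_Gamma p] turns [Gamma_convex] into the weighted AM-GM bound
   [Gamma m <= Gamma p ^ th * Gamma r ^ (1 - th)]. *)
Lemma ln_Gamma_convex th p r :
  0 < th < 1 -> 0 < p -> 0 < r ->
  ln_Gamma (th * p + (1 - th) * r) <= th * ln_Gamma p + (1 - th) * ln_Gamma r.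
Proof.
  intros Hth Hp Hr.
  pose proof (Gamma_convex th p r (ln_Gamma r - ln_Gamma p) Hth Hp Hr) as H.
  unfold ln_Gamma in *.
  set (A := ln (Gamma p)) in *. set (B := ln (Gamma r)) in *.
  assert (Ep : Gamma p = exp A) by (unfold A; rewrite exp_ln; [reflexivity | apply Gamma_pos; exact Hp]).
  assert (Er : Gamma r = exp B) by (unfold B; rewrite exp_ln; [reflexivity | apply Gamma_pos; exact Hr]).
  assert (E : th * exp ((1 - th) * (B - A)) * exp A + (1 - th) * exp (- th * (B - A)) * exp B
              = exp (th * A + (1 - th) * B)).
  { rewrite !Rmult_assoc, <- !exp_plus.
    replace ((1 - th) * (B - A) + A) with (th * A + (1 - th) * B) by ring.
    replace (- th * (B - A) + B) with (th * A + (1 - th) * B) by ring.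
    ring. }
  rewrite Ep, Er, E in H.
  rewrite <- ln_exp. apply ln_le; [apply Gamma_pos; nra | exact H].
Qed.

Lemma ln_Gamma_succ z : 0 < z -> ln_Gamma (z + 1) = ln_Gamma z + ln z.
Proof.
  intros Hz. unfold ln_Gamma. rewrite Gamma_succ, ln_mult by (try apply Gamma_pos; lra).
  ring.
Qed.

(** * Log-convex solutions of L (z + 1) = L z + ln z *)

Definition digamma_approx (x : R) (N : nat) : R :=
  ln (x + INR N) - sum_lt (fun j => / (x + INR j)) N.

Lemma digamma_approx_S x N : digamma_approx x (S N)
  = digamma_approx x N + (ln (x + INR N + 1) - ln (x + INR N) - / (x + INR N)).
Proof.
  unfold digamma_approx. cbn [sum_lt]. rewrite S_INR, Rplus_assoc. ring.
Qed.

Lemma digamma_approx_decr x N : 0 < x -> digamma_approx x (S N) <= digamma_approx x N.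
Proof.
  intros Hx. rewrite digamma_approx_S. pose proof (pos_INR N).
  pose proof (ln_succ_sub_le (x + INR N) ltac:(lra)). lra.
Qed.

Lemma digamma_approx_ge x N : 0 < x -> ln x - / x + / (x + INR N) <= digamma_approx x N.
Proof.
  intros Hx. induction N as [| N IH].
  - unfold digamma_approx. cbn [sum_lt INR]. rewrite Rplus_0_r. lra.
  - rewrite digamma_approx_S, S_INR, <- Rplus_assoc. pose proof (pos_INR N).
    pose proof (ln_succ_sub_ge (x + INR N) ltac:(lra)). lra.
Qed.

Lemma ex_lim_digamma_approx x : 0 < x -> ex_finite_lim_seq (digamma_approx x).
Proof.
  intros Hx. apply ex_finite_lim_seq_decr with (M := ln x - / x).
  - intros N. apply digamma_approx_decr, Hx.
  - intros N. pose proof (digamma_approx_ge x N Hx). pose proof (pos_INR N).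
    assert (0 < / (x + INR N)) by (apply Rinv_0_lt_compat; lra). lra.
Qed.

Definition ln_pochhammer (y : R) (N : nat) : R := sum_lt (fun j => ln (y + INR j)) N.

Lemma is_derive_ln_pochhammer x N : 0 < x ->
  is_derive (fun y => ln_pochhammer y N) x (sum_lt (fun j => / (x + INR j)) N).
Proof.
  intros Hx. unfold ln_pochhammer. induction N as [| N IH]; cbn [sum_lt].
  - apply (is_derive_const (V := R_NormedModule)).
  - apply (is_derive_plus (V := R_NormedModule)); [exact IH |].
    pose proof (pos_INR N). auto_derive; [lra | field; lra].
Qed.

Section LogConvexSolution.

Variable L : R -> R.
Hypothesis L_convex : forall th p r, 0 < th < 1 -> 0 < p -> 0 < r ->
  L (th * p + (1 - th) * r) <= th * L p + (1 - th) * L r.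
Hypothesis L_succ : forall z, 0 < z -> L (z + 1) = L z + ln z.

Lemma L_chord p q r : 0 < p -> p < q < r -> (r - p) * L q <= (r - q) * L p + (q - p) * L r.
Proof.
  intros Hp Hpqr. set (th := (r - q) / (r - p)).
  assert (Hth : 0 < th < 1).
  { unfold th. split; [apply Rdiv_lt_0_compat; lra |].
    apply Rmult_lt_reg_r with (r - p); [lra |]. field_simplify; lra. }
  pose proof (L_convex th p r Hth Hp ltac:(lra)) as H.
  replace (th * p + (1 - th) * r) with q in H by (unfold th; field; lra).
  apply (Rmult_le_compat_l (r - p)) in H; [| lra].
  replace ((r - p) * (th * L p + (1 - th) * L r)) with ((r - q) * L p + (q - p) * L r) in H
    by (unfold th; field; lra).
  exact H.
Qed.

(* Convexity between the integer neighbours [z - 1], [z], [z + 1], whose chords have slopes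
   [ln (z - 1)] and [ln z]. *)
Lemma L_increment_pos z h : 1 < z -> 0 < h < 1 ->
  h * ln (z - 1) <= L (z + h) - L z <= h * ln z.
Proof.
  intros Hz Hh.
  pose proof (L_succ z ltac:(lra)). pose proof (L_succ (z - 1) ltac:(lra)) as Hprev.
  replace (z - 1 + 1) with z in Hprev by ring.
  pose proof (L_chord (z - 1) z (z + h) ltac:(lra) ltac:(lra)).
  pose proof (L_chord z (z + h) (z + 1) ltac:(lra) ltac:(lra)).
  split; nra.
Qed.

Lemma L_increment_neg z h : 1 < z -> -1 < h < 0 ->
  h * ln z <= L (z + h) - L z <= h * ln (z - 1).
Proof.
  intros Hz Hh.
  pose proof (L_succ z ltac:(lra)). pose proof (L_succ (z - 1) ltac:(lra)) as Hprev.
  replace (z - 1 + 1) with z in Hprev by ring.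
  pose proof (L_chord (z - 1) (z + h) z ltac:(lra) ltac:(lra)).
  pose proof (L_chord (z + h) z (z + 1) ltac:(lra) ltac:(lra)).
  split; nra.
Qed.

Lemma L_diff_quotient_bounds z h : 1 < z -> -1 < h < 1 -> h <> 0 ->
  ln (z - 1) <= (L (z + h) - L z) / h <= ln z.
Proof.
  intros Hz Hh Hh0.
  destruct (Rlt_or_le 0 h) as [Hpos | Hneg].
  - pose proof (L_increment_pos z h Hz ltac:(lra)).
    split; [apply Rle_div_r | apply Rle_div_l]; lra.
  - pose proof (L_increment_neg z h Hz ltac:(lra)).
    replace ((L (z + h) - L z) / h) with ((L z - L (z + h)) / (- h)) by (field; exact Hh0).
    split; [apply Rle_div_r | apply Rle_div_l]; lra.
Qed.

Lemma L_shift y N : 0 < y -> L (y + INR N) = L y + ln_pochhammer y N.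
Proof.
  intros Hy. unfold ln_pochhammer. induction N as [| N IH]; cbn [sum_lt].
  - cbn [INR]. rewrite Rplus_0_r. ring.
  - rewrite S_INR, <- Rplus_assoc, L_succ, IH by (pose proof (pos_INR N); lra). ring.
Qed.

Lemma L_diff_quotient_shift x N h : 0 < x -> 1 < x + INR N -> -1 < h < 1 -> - x < h -> h <> 0 ->
  ln (x + INR N - 1)
  <= (L (x + h) - L x) / h + (ln_pochhammer (x + h) N - ln_pochhammer x N) / h
  <= ln (x + INR N).
Proof.
  intros Hx HN Hh Hhx Hh0.
  pose proof (L_diff_quotient_bounds (x + INR N) h HN Hh Hh0) as Hbounds.
  replace (x + INR N + h) with (x + h + INR N) in Hbounds by ring.
  rewrite !L_shift in Hbounds by lra.
  replace ((L (x + h) + ln_pochhammer (x + h) N - (L x + ln_pochhammer x N)) / h)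
    with ((L (x + h) - L x) / h + (ln_pochhammer (x + h) N - ln_pochhammer x N) / h)
    in Hbounds by (field; exact Hh0).
  exact Hbounds.
Qed.

Lemma L_is_derive x (P : R) : 0 < x -> is_lim_seq (digamma_approx x) P -> is_derive L x P.
Proof.
  intros Hx HP. apply is_derive_Reals. intros eps Heps.
  apply is_lim_seq_Reals in HP.
  destruct (HP (eps / 3) ltac:(lra)) as [N0 HN0].
  destruct (INR_unbounded (3 / eps + 2)) as [N1 HN1].
  set (N := Nat.max N0 N1).
  assert (Happrox : Rabs (digamma_approx x N - P) < eps / 3) by (apply HN0; unfold N; lia).
  assert (HN : 3 / eps + 2 < INR N) by (pose proof (le_INR N1 N ltac:(unfold N; lia)); lra).
  assert (H3 : 0 < 3 / eps) by (apply Rdiv_lt_0_compat; lra).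
  assert (Hgap : ln (x + INR N) - ln (x + INR N - 1) < eps / 3).
  { pose proof (ln_succ_sub_le (x + INR N - 1) ltac:(lra)) as Hle.
    replace (x + INR N - 1 + 1) with (x + INR N) in Hle by ring.
    apply Rle_lt_trans with (1 := Hle).
    replace (eps / 3) with (/ (3 / eps)) by (field; lra).
    apply Rinv_lt_contravar; nra. }
  pose proof (is_derive_ln_pochhammer x N Hx) as HS. apply is_derive_Reals in HS.
  destruct (HS (eps / 3) ltac:(lra)) as [d Hd].
  assert (Hdelta : 0 < Rmin d (Rmin x 1)).
  { apply Rmin_glb_lt; [apply cond_pos | apply Rmin_glb_lt; lra]. }
  exists (mkposreal _ Hdelta). intros h Hh0 Hh. simpl in Hh.
  pose proof (Rmin_l d (Rmin x 1)). pose proof (Rmin_r d (Rmin x 1)).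
  pose proof (Rmin_l x 1). pose proof (Rmin_r x 1).
  specialize (Hd h Hh0 ltac:(lra)).
  apply Rabs_def2 in Hh.
  pose proof (L_diff_quotient_shift x N h Hx ltac:(lra) ltac:(lra) ltac:(lra) Hh0).
  unfold digamma_approx in Happrox.
  apply Rabs_def2 in Happrox. apply Rabs_def2 in Hd. apply Rabs_def1; lra.
Qed.

End LogConvexSolution.

Lemma is_derive_Gamma x P : 0 < x -> is_derive ln_Gamma x P -> is_derive Gamma x (P * Gamma x).
Proof.
  intros Hx HP.
  apply (is_derive_ext_loc (V := R_NormedModule) (fun y => exp (ln_Gamma y))).
  - exists (mkposreal x Hx). intros y Hy. apply Rabs_def2 in Hy.
    unfold minus, plus, opp in Hy; simpl in Hy.
    unfold ln_Gamma. apply exp_ln, Gamma_pos. lra.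
  - replace (P * Gamma x) with (P * exp (ln_Gamma x))
      by (unfold ln_Gamma; rewrite exp_ln; [reflexivity | apply Gamma_pos, Hx]).
    apply (is_derive_comp (V := R_NormedModule) exp ln_Gamma x); [apply is_derive_exp | exact HP].
Qed.

Lemma is_lim_seq_digamma x : 0 < x -> is_lim_seq (digamma_approx x) (digamma x).
Proof.
  intros Hx. destruct (ex_lim_digamma_approx x Hx) as [P HP].
  pose proof (L_is_derive ln_Gamma ln_Gamma_convex ln_Gamma_succ x P Hx HP) as HL.
  replace (digamma x) with P; [exact HP |].
  unfold digamma. rewrite (is_derive_unique _ _ _ (is_derive_Gamma x P Hx HL)).
  field. apply Rgt_not_eq, Gamma_pos, Hx.
Qed.

Lemma is_lim_seq_digamma_diff x c : 0 < x -> 0 < c ->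
  is_lim_seq (fun N => digamma_approx (x + c) N - digamma_approx x N) (digamma_diff c x).
Proof.
  intros Hx Hc. apply is_lim_seq_minus'; apply is_lim_seq_digamma; lra.
Qed.

(** * Comparison of the approximating sums *)

Definition digamma_diff_term (x a u : R) : R := / (x + u) - / (x + a + u).

Section DigammaDiffTerm.

Variables x a : R.
Hypothesis Hx : 0 < x.
Hypothesis Ha : 0 < a.

Lemma digamma_diff_term_eq u : 0 <= u -> digamma_diff_term x a u = a / ((x + u) * (x + a + u)).
Proof. intros Hu. unfold digamma_diff_term. field. lra. Qed.

Lemma digamma_diff_term_pos u : 0 <= u -> 0 < digamma_diff_term x a u.
Proof.
  intros Hu. rewrite digamma_diff_term_eq by exact Hu.
  apply Rdiv_lt_0_compat; [exact Ha | nra].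
Qed.

Lemma digamma_diff_term_decr u v : 0 <= u <= v -> digamma_diff_term x a v <= digamma_diff_term x a u.
Proof.
  intros Huv. rewrite !digamma_diff_term_eq by lra.
  apply Rmult_le_compat_l; [lra |].
  apply Rinv_le_contravar; [nra | apply Rmult_le_compat; lra].
Qed.

(* The first term of a block is kept; the other [m - 1] are bounded below by the next integer. *)
Lemma digamma_diff_term_block k n m : (1 <= m <= k)%nat ->
  digamma_diff_term x a (INR n) + (INR m - 1) * digamma_diff_term x a (INR n + 1)
  <= sum_lt (fun r => digamma_diff_term x a (INR n + INR r / INR k)) m.
Proof.
  intros Hm. induction m as [| m IH]; [lia |].
  pose proof (pos_INR n). cbn [sum_lt]. rewrite S_INR.
  destruct (Nat.eq_dec m 0) as [-> | Hm0].
  - cbn [sum_lt INR]. unfold Rdiv. rewrite Rmult_0_l, Rplus_0_r. lra.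
  - assert (Hk : 0 < INR k) by (apply lt_0_INR; lia).
    assert (Hmk : 0 <= INR m / INR k <= 1).
    { split; [apply Rdiv_le_0_compat; [apply pos_INR | exact Hk] |].
      apply Rle_div_l; [exact Hk |]. rewrite Rmult_1_l. apply le_INR. lia. }
    pose proof (digamma_diff_term_decr (INR n + INR m / INR k) (INR n + 1) ltac:(lra)).
    specialize (IH ltac:(lia)). lra.
Qed.

Lemma digamma_diff_term_sum_refine k N : (1 <= k)%nat ->
  sum_lt (fun n => digamma_diff_term x a (INR n)) N
  + (INR k - 1) * sum_lt (fun n => digamma_diff_term x a (INR n + 1)) N
  <= sum_lt (fun j => digamma_diff_term x a (INR j / INR k)) (k * N).
Proof.
  intros Hk. induction N as [| N IH].
  - rewrite Nat.mul_0_r. cbn [sum_lt]. lra.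
  - rewrite Nat.mul_succ_r, sum_lt_add. cbn [sum_lt].
    pose proof (digamma_diff_term_block k N k ltac:(lia)) as Hblock.
    rewrite (sum_lt_ext (fun r => digamma_diff_term x a (INR (k * N + r) / INR k))
               (fun r => digamma_diff_term x a (INR N + INR r / INR k))).
    + lra.
    + intros r _. rewrite plus_INR, mult_INR. f_equal. field.
      apply not_0_INR. lia.
Qed.

End DigammaDiffTerm.

Lemma digamma_approx_diff x c N :
  digamma_approx (x + c) N - digamma_approx x N
  = (ln (x + c + INR N) - ln (x + INR N)) + sum_lt (fun j => digamma_diff_term x c (INR j)) N.
Proof. unfold digamma_approx, digamma_diff_term. rewrite <- sum_lt_minus. ring. Qed.

(* Rescaling by [k] leaves the logarithmic part unchanged and samples the terms on the grid [j / k]. *)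
Lemma digamma_approx_diff_scale x a k N : 0 < x -> 0 < a -> (1 <= k)%nat ->
  INR k * (digamma_approx (x * INR k + a * INR k) (k * N) - digamma_approx (x * INR k) (k * N))
  = INR k * (ln (x + a + INR N) - ln (x + INR N))
    + sum_lt (fun j => digamma_diff_term x a (INR j / INR k)) (k * N).
Proof.
  intros Hx Ha Hk. assert (HK : 0 < INR k) by (apply lt_0_INR; lia).
  rewrite digamma_approx_diff, mult_INR, Rmult_plus_distr_l, sum_lt_scal.
  pose proof (pos_INR N).
  replace (x * INR k + a * INR k + INR k * INR N) with (INR k * (x + a + INR N)) by ring.
  replace (x * INR k + INR k * INR N) with (INR k * (x + INR N)) by ring.
  rewrite !ln_mult by lra. f_equal; [ring |].
  apply sum_lt_ext. intros j _. unfold digamma_diff_term. pose proof (pos_INR j).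
  field. repeat split; try lra; nra.
Qed.

Lemma digamma_approx_diff_scale_ge x a k N : 0 < x -> 0 < a -> (2 <= k)%nat -> (1 <= N)%nat ->
  digamma_approx (x + a) N - digamma_approx x N + (INR k - 1) * digamma_diff_term x a 1
  <= INR k * (digamma_approx (x * INR k + a * INR k) (k * N) - digamma_approx (x * INR k) (k * N)).
Proof.
  intros Hx Ha Hk HN.
  rewrite digamma_approx_diff_scale, digamma_approx_diff by (assumption || lia).
  assert (HK : 2 <= INR k) by (apply (le_INR 2); exact Hk).
  pose proof (pos_INR N).
  assert (Hln : 0 < ln (x + a + INR N) - ln (x + INR N)).
  { pose proof (ln_increasing (x + INR N) (x + a + INR N) ltac:(lra) ltac:(lra)). lra. }
  pose proof (digamma_diff_term_sum_refine x a Hx Ha k N ltac:(lia)) as Hrefine.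
  assert (Hfirst : digamma_diff_term x a 1
                   <= sum_lt (fun n => digamma_diff_term x a (INR n + 1)) N).
  { destruct N as [| N]; [lia |].
    replace 1 with (INR 0 + 1) at 1 by (simpl; ring).
    apply (sum_lt_ge_first (fun n => digamma_diff_term x a (INR n + 1))).
    intros n. left. apply digamma_diff_term_pos; [exact Hx | exact Ha |].
    pose proof (pos_INR n). lra. }
  nra.
Qed.

Lemma filterlim_mul_l_eventually k : (1 <= k)%nat ->
  filterlim (fun N => (k * N)%nat) eventually eventually.
Proof. intros Hk P [N0 HP]. exists N0. intros n Hn. apply HP. nia. Qed.

Theorem lemma5p4 (x a : R) (k : nat) :
  0 < x -> 0 < a -> (2 <= k)%nat ->
  INR k * digamma_diff (a * INR k) (x * INR k) > digamma_diff a x.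
Proof.
  intros Hx Ha Hk.
  assert (HK : 2 <= INR k) by (apply (le_INR 2); exact Hk).
  set (c := (INR k - 1) * digamma_diff_term x a 1).
  assert (Hc : 0 < c).
  { apply Rmult_lt_0_compat; [lra | apply digamma_diff_term_pos; lra]. }
  assert (Hsmall : is_lim_seq (fun N => digamma_approx (x + a) N - digamma_approx x N + c)
                     (digamma_diff a x + c)).
  { apply is_lim_seq_plus'; [apply is_lim_seq_digamma_diff; lra | apply is_lim_seq_const]. }
  assert (Hlarge : is_lim_seq
    (fun N => INR k * (digamma_approx (x * INR k + a * INR k) (k * N)
                       - digamma_approx (x * INR k) (k * N)))
    (INR k * digamma_diff (a * INR k) (x * INR k))).
  { apply (is_lim_seq_scal_l _ (INR k) (digamma_diff (a * INR k) (x * INR k))).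
    apply (is_lim_seq_subseq (fun N => digamma_approx (x * INR k + a * INR k) N
                                        - digamma_approx (x * INR k) N)).
    - apply filterlim_mul_l_eventually. lia.
    - apply is_lim_seq_digamma_diff; nra. }
  pose proof (is_lim_seq_le_loc _ _ _ _
    (ex_intro _ 1%nat (fun N HN => digamma_approx_diff_scale_ge x a k N Hx Ha Hk HN))
    Hsmall Hlarge) as Hle.
  simpl in Hle. lra.
Qed.
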